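(* Let $\mathcal{S},\mathcal{A}$ be finite nonempty sets, $\lambda\in(0,1)$, $b>0$, $r_{sa}\in\mathbb{R}$, let $\bm{\nu}$ satisfy $\bm{\nu}_s\in\Delta(\mathcal{A})$ for each $s\in\mathcal{S}$, and for each $(s,a)$ let $\mathcal{U}_{sa}\subseteq\Delta(\mathcal{S})$ be a nonempty set over which the minima below are attained. For $\bm{x}\in(\mathbb{R}_{>0})^{\mathcal{S}}$ define $$\tilde t(\bm{x})_s=\sum_{a\in\mathcal{A}}\nu_{sa}\exp(b\,r_{sa})\min_{\bm{p}\in\mathcal{U}_{sa}}\prod_{s'\in\mathcal{S}}x_{s'}^{\lambda p_{s'}}.$$ Then for each $s\in\mathcal{S}$ the function $\bm{x}\mapsto\tilde t(\bm{x})_s$ is concave on $(\mathbb{R}_{>0})^{\mathcal{S}}$.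
   Context: $\Delta(\mathcal{X})$ denotes the probability simplex over a finite set $\mathcal{X}$. *)

From HB Require Import structures.
From mathcomp Require Import all_boot all_order all_algebra.
From mathcomp Require Import all_classical all_reals all_analysis.
Set Implicit Arguments. Unset Strict Implicit. Unset Printing Implicit Defensive.
Import Order.TTheory GRing.Theory Num.Theory.
Local Open Scope classical_set_scope.
Local Open Scope ring_scope.

Definition in_simplex (R : realType) (T : finType) (p : T -> R) : Prop :=
  (forall i, 0 <= p i) /\ \sum_(i : T) p i = 1.

Definition wprod (R : realType) (S : finType) (lam : R) (x p : S -> R) : R :=
  \prod_(s' : S) (x s') `^ (lam * p s').

(* min over U (attainment is assumed in the theorem; then inf = min) *)
Definition minU (R : realType) (S : finType) (lam : R)
  (U : set (S -> R)) (x : S -> R) : R :=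
  inf [set wprod lam x p | p in U].

Definition ttilde (R : realType) (S A : finType) (lam b : R)
  (r nu : S -> A -> R) (U : S -> A -> set (S -> R)) (x : S -> R) (s : S) : R :=
  \sum_(a : A) nu s a * expR (b * r s a) * minU lam (U s a) x.

Definition pos_vec (R : realType) (S : finType) (x : S -> R) : Prop :=
  forall s, 0 < x s.

Definition concave_on_pos (R : realType) (S : finType) (f : (S -> R) -> R) : Prop :=
  forall (x y : S -> R) (t : R), pos_vec x -> pos_vec y -> 0 <= t <= 1 ->
    t * f x + (1 - t) * f y <= f (fun s => t * x s + (1 - t) * y s).

From HB Require Import structures.
From mathcomp Require Import all_boot all_order all_algebra.
From mathcomp Require Import all_classical all_reals all_analysis.
From mathcomp Require Import ring lra.
Set Implicit Arguments. Unset Strict Implicit. Unset Printing Implicit Defensive.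
Import Order.TTheory GRing.Theory Num.Theory.
Local Open Scope classical_set_scope.
Local Open Scope ring_scope.

(* For a fixed kernel p the map x |-> prod_s' x_s'^(lam p_s') is a weighted
   geometric mean with total weight lam <= 1.  Such a mean lies below each of
   its tangent hyperplanes, which is Jensen's inequality for expR, so it is
   concave.  A pointwise minimum of concave functions is concave once the
   minimum is attained, and a nonnegative combination of concave functions is
   concave. *)

Section WeightedGeometricMean.
Variable R : realType.

Lemma expR_tangent_le (u v : R) : expR v * (1 + (u - v)) <= expR u.
Proof.
by rewrite -[u in leRHS](subrK v) expRD mulrC ler_wpM2r ?expR_gt0 ?expR_ge1Dx.
Qed.

(* The defect 1 - \sum_i w i acts as an extra weight at the point 0. *)
Lemma expR_wsum_le (I : finType) (w u : I -> R) :
  (forall i, 0 <= w i) -> \sum_i w i <= 1 ->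
  expR (\sum_i w i * u i) <= \sum_i w i * expR (u i) + (1 - \sum_i w i).
Proof.
move=> w_ge0 W_le1; set v := \sum_i w i * u i; set W := \sum_i w i.
have tangent_i i : w i * (expR v * (1 + (u i - v))) <= w i * expR (u i).
  by rewrite ler_wpM2l ?expR_tangent_le.
have tangent_0 : (1 - W) * (expR v * (1 + (0 - v))) <= (1 - W) * expR 0.
  by rewrite ler_wpM2l ?subr_ge0 ?expR_tangent_le.
rewrite expR0 mulr1 in tangent_0.
have tangents_sum : \sum_i w i * (expR v * (1 + (u i - v))) +
    (1 - W) * (expR v * (1 + (0 - v))) = expR v.
  have -> : \sum_i w i * (expR v * (1 + (u i - v))) = expR v * ((1 - v) * W + v).
    rewrite /W /v mulr_sumr -big_split mulr_sumr /=.
    by apply: eq_bigr => i _; ring.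
  by ring.
by rewrite -[leLHS]tangents_sum; apply: lerD => //; exact: ler_sum.
Qed.

Lemma prod_powR_expR (I : finType) (w x : I -> R) : (forall i, 0 < x i) ->
  \prod_i x i `^ w i = expR (\sum_i w i * ln (x i)).
Proof.
by move=> x_gt0; rewrite expR_sum; apply: eq_bigr => i _; rewrite /powR gt_eqF.
Qed.

Lemma prod_powR_le_tangent (I : finType) (w x z : I -> R) :
  (forall i, 0 <= w i) -> \sum_i w i <= 1 ->
  (forall i, 0 < x i) -> (forall i, 0 < z i) ->
  \prod_i x i `^ w i <=
  \prod_i z i `^ w i * (\sum_i w i * (x i / z i) + (1 - \sum_i w i)).
Proof.
move=> w_ge0 W_le1 x_gt0 z_gt0; rewrite !prod_powR_expR //.
have -> : \sum_i w i * ln (x i) =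
    \sum_i w i * ln (z i) + \sum_i w i * ln (x i / z i).
  by rewrite -big_split /=; apply: eq_bigr => i _; rewrite ln_div ?posrE //; ring.
rewrite expRD ler_wpM2l ?expR_ge0 //.
apply: le_trans (expR_wsum_le (fun i => ln (x i / z i)) w_ge0 W_le1) _.
rewrite lerD2r (eq_bigr (fun i => w i * (x i / z i))) // => i _.
by rewrite lnK // posrE divr_gt0.
Qed.

Lemma pos_vec_conv (S : finType) (x y : S -> R) (t : R) :
  pos_vec x -> pos_vec y -> 0 <= t <= 1 ->
  pos_vec (fun s => t * x s + (1 - t) * y s).
Proof.
move=> x_gt0 y_gt0 /andP[t_ge0 t_le1] s.
by have := x_gt0 s; have := y_gt0 s; nra.
Qed.

Lemma prod_powR_concave (S : finType) (w : S -> R) :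
  (forall s, 0 <= w s) -> \sum_s w s <= 1 ->
  concave_on_pos (fun x => \prod_s x s `^ w s).
Proof.
move=> w_ge0 W_le1 x y t x_gt0 y_gt0 t01; have /andP[t_ge0 t_le1] := t01.
pose z s := t * x s + (1 - t) * y s.
have z_gt0 : pos_vec z := pos_vec_conv x_gt0 y_gt0 t01.
have tangent_x := prod_powR_le_tangent w_ge0 W_le1 x_gt0 z_gt0.
have tangent_y := prod_powR_le_tangent w_ge0 W_le1 y_gt0 z_gt0.
set G := \prod_s z s `^ w s in tangent_x tangent_y *.
set Sx := \sum_s w s * (x s / z s) in tangent_x *.
set Sy := \sum_s w s * (y s / z s) in tangent_y *.
set W := \sum_s w s in tangent_x tangent_y *.
have weights : t * Sx + (1 - t) * Sy = W.
  rewrite /Sx /Sy !mulr_sumr -big_split /=; apply: eq_bigr => s _.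
  by have := z_gt0 s; rewrite /z lt0r => /andP[z_neq0 _]; field.
have t'_ge0 : 0 <= 1 - t by rewrite subr_ge0.
apply: le_trans
  (lerD (ler_wpM2l t_ge0 tangent_x) (ler_wpM2l t'_ge0 tangent_y)) _.
have -> : t * (G * (Sx + (1 - W))) + (1 - t) * (G * (Sy + (1 - W))) =
    G * (t * Sx + (1 - t) * Sy + (1 - W)) by ring.
by rewrite weights addrC subrK mulr1.
Qed.

End WeightedGeometricMean.

Section ConcaveOnPos.
Variables (R : realType) (S : finType).

Lemma inf_image_eq_min (I : Type) (V : set I) (f : I -> R) (p : I) :
  V p -> (forall q, V q -> f p <= f q) -> inf [set f q | q in V] = f p.
Proof.
move=> Vp p_min; apply/le_anti/andP; split.
  by apply: ge_inf; [exists (f p) => _ [q Vq <-]; exact: p_min | exists p].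
by apply: lb_le_inf; [exists (f p), p | move=> _ [q Vq <-]; exact: p_min].
Qed.

Lemma concave_on_pos_inf (I : Type) (V : set I) (F : I -> (S -> R) -> R) :
  (forall p, V p -> concave_on_pos (F p)) ->
  (forall x, pos_vec x -> exists2 p, V p & forall q, V q -> F p x <= F q x) ->
  concave_on_pos (fun x => inf [set F p x | p in V]).
Proof.
move=> F_concave F_min x y t x_gt0 y_gt0 t01; have /andP[t_ge0 t_le1] := t01.
have [px Vpx px_min] := F_min x x_gt0; have [py Vpy py_min] := F_min y y_gt0.
have [pz Vpz pz_min] := F_min _ (pos_vec_conv x_gt0 y_gt0 t01).
rewrite (inf_image_eq_min Vpx px_min) (inf_image_eq_min Vpy py_min).
rewrite (inf_image_eq_min Vpz pz_min).
apply: le_trans (F_concave pz Vpz x y t x_gt0 y_gt0 t01).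
by apply: lerD; apply: ler_wpM2l; rewrite ?subr_ge0 ?px_min ?py_min.
Qed.

Lemma concave_on_pos_sum (A : finType) (c : A -> R) (f : A -> (S -> R) -> R) :
  (forall a, 0 <= c a) -> (forall a, concave_on_pos (f a)) ->
  concave_on_pos (fun x => \sum_a c a * f a x).
Proof.
move=> c_ge0 f_concave x y t x_gt0 y_gt0 t01.
rewrite !mulr_sumr -big_split /=; apply: ler_sum => a _.
apply: le_trans (ler_wpM2l (c_ge0 a) (f_concave a x y t x_gt0 y_gt0 t01)).
by rewrite mulrDr !mulrA [c a * t]mulrC [c a * (1 - t)]mulrC.
Qed.

Lemma wprod_concave (lam : R) (p : S -> R) : 0 <= lam <= 1 -> in_simplex p ->
  concave_on_pos (fun x => wprod lam x p).
Proof.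
move=> /andP[lam_ge0 lam_le1] [p_ge0 p_sum1]; apply: prod_powR_concave.
- by move=> s; rewrite mulr_ge0.
- by rewrite -mulr_sumr p_sum1 mulr1.
Qed.

End ConcaveOnPos.

Theorem lemma3 (R : realType) (S A : finType) (s0 : S) (a0 : A)
  (lam b : R) (r nu : S -> A -> R) (U : S -> A -> set (S -> R)) :
  0 < lam < 1 -> 0 < b ->
  (forall s, in_simplex (nu s)) ->
  (forall s a, U s a !=set0) ->
  (forall s a p, U s a p -> in_simplex p) ->
  (forall s a (x : S -> R), pos_vec x ->
     exists2 p, U s a p & forall q, U s a q -> wprod lam x p <= wprod lam x q) ->
  forall s, concave_on_pos (fun x => ttilde lam b r nu U x s).
Proof.
move=> /andP[lam_gt0 lam_lt1] _ nu_simplex _ U_simplex U_min s.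
have lam01 : 0 <= lam <= 1 by rewrite (ltW lam_gt0) (ltW lam_lt1).
apply: (concave_on_pos_sum (c := fun a => nu s a * expR (b * r s a))
                           (f := fun a => minU lam (U s a))) => a.
  by have [nu_ge0 _] := nu_simplex s; rewrite mulr_ge0 ?expR_ge0.
apply: (concave_on_pos_inf (F := fun p x => wprod lam x p)) (U_min s a).
by move=> p /U_simplex; exact: wprod_concave.
Qed.
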